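(* Let $G=(V,P,d)$ be a reversible metric Markov chain, $f\in\mathbb R^V$, and $\phi:I\to\mathbb R$ a concave, three times differentiable function on an open interval $I$ containing $f(V)$. Let $x\in V$ and assume $\phi'''(s)\ge0$ whenever $\min_{y\sim x}f(y)<s<f(x)$. Then \[ \Delta(\phi\circ f)(x)\le\phi'(f(x))\,\Delta f(x)+\frac{P_0}{2}\,\phi''(f(x))\,(\nabla_-f(x))^2 . \]
   Context: $V$ finite; $P:V\times V\to[0,\infty)$ with symmetric support; $x\sim y$ iff $x\neq y$ and $P(x,y)>0$; $d$ is a path distance ($d(x,y)=\inf$ of $\sum d(x_{k-1},x_k)$ over paths $x=x_0\sim\dots\sim x_n=y$), finite; there is a probability $m$ with $m(x)P(x,y)=m(y)P(y,x)$. $\Delta f(x)=\sum_yP(x,y)(f(y)-f(x))$. $P_0=\inf_{x\sim y}P(x,y)d(x,y)^2$. $\nabla_-f(x)=\max_{y\sim x}\frac{(f(y)-f(x))_-}{d(x,y)}$, where $s_-=\max(-s,0)$. *)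

From Stdlib Require Import Reals.
From Coquelicot Require Import Coquelicot.
From mathcomp Require Import all_boot.

Set Implicit Arguments.
Unset Strict Implicit.
Unset Printing Implicit Defensive.

Local Open Scope R_scope.

Definition adjb (V : finType) (P : V -> V -> R) (x y : V) : bool :=
  (x != y) && (if Rlt_dec 0 (P x y) then true else false).

(* length of the path x = x_0 ~ x_1 ~ ... ~ x_n (s = [x_1; ...; x_n]) *)
Definition path_length (V : finType) (d : V -> V -> R) (x : V) (s : seq V) : R :=
  \big[Rplus/0]_(p <- zip (x :: s) s) d p.1 p.2.

Definition reversible_metric_chain (V : finType) (P d : V -> V -> R) : Prop :=
  (forall x y, 0 <= P x y) /\
  (forall x y, 0 < P x y <-> 0 < P y x) /\
  (forall x y, 0 <= d x y) /\
  (forall x y, d x y = 0 <-> x = y) /\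
  (forall x y, d x y = d y x) /\
  (forall x y z, d x z <= d x y + d y z) /\
  (* d is the path distance: d(x,y) = inf over paths x ~ ... ~ y of the sum of
     d along edges, the infimum being finite (hence attained) *)
  (forall x y,
     (forall s, path (adjb P) x s -> last x s = y -> d x y <= path_length d x s) /\
     (exists s, path (adjb P) x s /\ last x s = y /\ path_length d x s = d x y)) /\
  (exists m : V -> R,
     (forall x, 0 <= m x) /\ \big[Rplus/0]_(x : V) m x = 1 /\
     (forall x y, m x * P x y = m y * P y x)).

Definition Lap (V : finType) (P : V -> V -> R) (f : V -> R) (x : V) : R :=
  \big[Rplus/0]_(y : V) (P x y * (f y - f x)).

Definition negpart (s : R) : R := Rmax (- s) 0.

(* ∇_- f(x) = max_{y ~ x} (f(y)-f(x))_- / d(x,y); (= 0 if x has no neighbour) *)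
Definition grad_minus (V : finType) (P d : V -> V -> R) (f : V -> R) (x : V) : R :=
  \big[Rmax/0]_(y : V | adjb P x y) (negpart (f y - f x) / d x y).

(* P_0 = inf_{x ~ y} P(x,y) d(x,y)^2 ; convention 0 if there is no edge *)
Definition P0 (V : finType) (P d : V -> V -> R) : R :=
  match [seq P p.1 p.2 * d p.1 p.2 ^ 2 | p <- enum [pred p : V * V | adjb P p.1 p.2]] with
  | [::] => 0
  | v :: vs => foldr Rmin v vs
  end.

Definition in_oint (a b : Rbar) (s : R) : Prop := Rbar_lt a s /\ Rbar_lt s b.

Definition concave_on (a b : Rbar) (phi : R -> R) : Prop :=
  forall u v t, in_oint a b u -> in_oint a b v -> 0 <= t <= 1 ->
    t * phi u + (1 - t) * phi v <= phi (t * u + (1 - t) * v).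

From HB Require Import structures.
From Stdlib Require Import Reals Lra.
From Coquelicot Require Import Coquelicot.
From mathcomp Require Import all_boot.

Local Open Scope R_scope.

(* Concavity forces phi'' <= 0, so for a neighbour y with f y >= f x the tangent
   of phi at f x bounds phi (f y) from above.  For f y < f x the hypothesis
   phi''' >= 0 on (f y, f x) makes phi'' increase towards f x, so the
   second-order Taylor polynomial at f x is an upper bound as well; its
   quadratic term is phi''(f x)/2 ((f y - f x)_-)^2.  Summing against P(x, .)
   and using phi''(f x) <= 0, it remains to bound sum_y P(x,y) ((f y - f x)_-)^2
   from below by its term at a neighbour realising grad_- f(x), where
   P(x,y) d(x,y)^2 >= P_0. *)

Lemma in_oint_between a b u v s :
  in_oint a b u -> in_oint a b v -> u <= s <= v -> in_oint a b s.
Proof. by case: a => [ra||]; case: b => [rb||]; rewrite /in_oint /=; lra. Qed.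

Lemma locally_in_oint a b c : in_oint a b c -> locally c (in_oint a b).
Proof.
move=> [ac cb].
exact: filter_and (open_Rbar_gt' c a ac) (open_Rbar_lt' c b cb).
Qed.

Lemma locally_segment (Q : R -> Prop) c :
  locally c Q -> exists2 h, 0 < h & forall s, c - h <= s <= c + h -> Q s.
Proof.
move=> [eps Heps]; have eps_gt0 := cond_pos eps.
exists (eps / 2) => [|s Hs]; first lra.
apply: Heps; change (Rabs (s - c) < eps); apply: Rabs_def1; lra.
Qed.

Lemma MVT_is_derive (F dF : R -> R) u v : u < v ->
  (forall s, u <= s <= v -> is_derive F s (dF s)) ->
  exists2 z, u < z < v & F v - F u = dF z * (v - u).
Proof.
move=> uv dF_F; have [|z [Fuv uzv]] := MVT_cor2 F dF u v uv; last by exists z.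
by move=> s Hs; apply/is_derive_Reals/dF_F.
Qed.

Lemma le_of_is_derive_ge0 (F dF : R -> R) u v : u <= v ->
  (forall s, u <= s <= v -> is_derive F s (dF s)) ->
  (forall s, u < s < v -> 0 <= dF s) -> F u <= F v.
Proof.
move=> uv dF_F dF_ge0; have [{}uv|->] := Rle_lt_or_eq_dec u v uv; last lra.
have [z uzv Fuv] := MVT_is_derive F dF u v uv dF_F.
have := Rmult_le_pos (dF z) (v - u) (dF_ge0 z uzv); lra.
Qed.

Lemma ge_of_is_derive_le0 (F dF : R -> R) u v : u <= v ->
  (forall s, u <= s <= v -> is_derive F s (dF s)) ->
  (forall s, u < s < v -> dF s <= 0) -> F v <= F u.
Proof.
move=> uv dF_F dF_le0.
suff: - F u <= - F v by lra.
apply: (le_of_is_derive_ge0 (fun s => - F s) (fun s => - dF s) u v uv) => s Hs.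
- exact: is_derive_opp (dF_F s Hs).
- by have := dF_le0 s Hs; lra.
Qed.

Lemma concave_derive2_le0 a b (phi phi1 phi2 : R -> R) c :
  concave_on a b phi ->
  (forall s, in_oint a b s -> is_derive phi s (phi1 s)) ->
  (forall s, in_oint a b s -> is_derive phi1 s (phi2 s)) ->
  in_oint a b c -> continuous phi2 c -> phi2 c <= 0.
Proof.
move=> conc d_phi d_phi1 Ic cont2; apply: Rnot_lt_le => pos2.
have near_c : locally c (fun s => in_oint a b s /\ 0 < phi2 s).
  apply: filter_and; first exact: locally_in_oint.
  exact: cont2 _ (open_gt 0 _ pos2).
have [h h_gt0 near_h] := locally_segment _ _ near_c.
have I s : c - h <= s <= c + h -> in_oint a b s by move=> /near_h [].
(* phi'' > 0 on [c - h, c + h] makes phi' increase strictly there, so phi is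
   steeper on [c, c + h] than on [c - h, c], against midpoint concavity. *)
have [|s Hs|x1 cx1 E1] := MVT_is_derive phi phi1 c (c + h);
  [lra | apply/d_phi/I; lra |].
have [|s Hs|x2 cx2 E2] := MVT_is_derive phi phi1 (c - h) c;
  [lra | apply/d_phi/I; lra |].
have [|s Hs|x3 x23 E3] := MVT_is_derive phi1 phi2 x2 x1;
  [lra | apply/d_phi1/I; lra |].
have pos3 : 0 < phi2 x3 by apply: (proj2 (near_h x3 _)); lra.
have mid : 1 / 2 * phi (c + h) + (1 - 1 / 2) * phi (c - h) <= phi c.
  have := conc (c + h) (c - h) (1 / 2) (I (c + h) ltac:(lra)) (I (c - h) ltac:(lra)).
  by rewrite (_ : 1 / 2 * (c + h) + (1 - 1 / 2) * (c - h) = c); [apply; lra | field].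
have : 0 < (phi1 x1 - phi1 x2) * h by rewrite E3; apply: Rmult_lt_0_compat; nra.
nra.
Qed.

Lemma taylor1_le_right (F F1 F2 : R -> R) c v : c <= v ->
  (forall s, c <= s <= v -> is_derive F s (F1 s)) ->
  (forall s, c <= s <= v -> is_derive F1 s (F2 s)) ->
  (forall s, c < s < v -> F2 s <= 0) ->
  F v - F c <= F1 c * (v - c).
Proof.
move=> cv dF dF1 F2_le0.
suff: F v - F1 c * v <= F c - F1 c * c by lra.
apply: (ge_of_is_derive_le0 (fun s => F s - F1 c * s) (fun s => F1 s - F1 c) c v cv)
  => s Hs.
- auto_derive; first by exists (F1 s); exact: dF.
  by rewrite (is_derive_unique _ _ _ (dF s Hs)); ring.
- suff: F1 s <= F1 c by lra.
  apply: (ge_of_is_derive_le0 F1 F2 c s) => [|t Ht|t Ht]; first lra.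
  + by apply: dF1; lra.
  + by apply: F2_le0; lra.
Qed.

Lemma taylor2_le_left (F F1 F2 F3 : R -> R) u c : u <= c ->
  (forall s, u <= s <= c -> is_derive F s (F1 s)) ->
  (forall s, u <= s <= c -> is_derive F1 s (F2 s)) ->
  (forall s, u <= s <= c -> is_derive F2 s (F3 s)) ->
  (forall s, u < s < c -> 0 <= F3 s) ->
  F u - F c <= F1 c * (u - c) + F2 c / 2 * (u - c) ^ 2.
Proof.
move=> uc dF dF1 dF2 F3_ge0.
have F2_le s : u <= s <= c -> F2 s <= F2 c.
  move=> Hs; apply: (le_of_is_derive_ge0 F2 F3 s c) => [|t Ht|t Ht]; first lra.
  + by apply: dF2; lra.
  + by apply: F3_ge0; lra.
pose k s := F1 s - F1 c - F2 c * (s - c).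
have k_ge0 s : u <= s <= c -> 0 <= k s.
  move=> Hs; suff: k c <= k s by rewrite /k; lra.
  apply: (ge_of_is_derive_le0 k (fun t => F2 t - F2 c) s c) => [|t Ht|t Ht]; first lra.
  + rewrite /k; auto_derive; first by exists (F2 t); apply: dF1; lra.
    by rewrite (is_derive_unique _ _ _ (dF1 t ltac:(lra))); ring.
  + by have := F2_le t ltac:(lra); lra.
pose g s := F s - F1 c * (s - c) - F2 c / 2 * (s - c) ^ 2.
suff: g u <= g c by rewrite /g; lra.
apply: (le_of_is_derive_ge0 g k u c uc) => s Hs.
- rewrite /g /k; auto_derive; first by exists (F1 s); exact: dF.
  by rewrite (is_derive_unique _ _ _ (dF s Hs)); field.
- by apply: k_ge0; lra.
Qed.

HB.instance Definition _ := Monoid.isComLaw.Build R 0 Rplus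
  (fun x y z => esym (Rplus_assoc x y z)) Rplus_comm Rplus_0_l.

Lemma Rsum_distrr (V : finType) (k : R) (F : V -> R) :
  \big[Rplus/0]_(y : V) (k * F y) = k * \big[Rplus/0]_(y : V) F y.
Proof. by apply: (big_rec2 (fun s t => s = k * t)) => [|y s t _ ->]; ring. Qed.

Lemma Rsum_le (V : finType) (F G : V -> R) : (forall y, F y <= G y) ->
  \big[Rplus/0]_(y : V) F y <= \big[Rplus/0]_(y : V) G y.
Proof. by move=> FG; apply: (big_ind2 Rle) => //; [lra | move=> *; lra]. Qed.

Lemma Rsum_ge_term (V : finType) (F : V -> R) y0 : (forall y, 0 <= F y) ->
  F y0 <= \big[Rplus/0]_(y : V) F y.
Proof.
move=> F_ge0; rewrite (bigD1 y0) //=.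
suff: 0 <= \big[Rplus/0]_(y | y != y0) F y by lra.
by apply: (big_ind (Rle 0)) => //; [lra | move=> *; lra].
Qed.

Lemma bigRmax0_cases (V : finType) (p : pred V) (F : V -> R) :
  \big[Rmax/0]_(y : V | p y) F y = 0 \/
  exists2 y, p y & \big[Rmax/0]_(y : V | p y) F y = F y.
Proof.
apply: (big_ind (fun m => m = 0 \/ exists2 y, p y & m = F y));
  [by left | | by right; exists i].
by move=> m1 m2 H1 H2; rewrite /Rmax; case: Rle_dec.
Qed.

Lemma foldr_Rmin_le (T : eqType) (g : T -> R) (q : T) (l : seq T) p :
  p \in q :: l -> foldr Rmin (g q) (map g l) <= g p.
Proof.
elim: l => [|r l IHl] /=; first by rewrite mem_seq1 => /eqP ->; lra.
rewrite !in_cons => /or3P [pq | /eqP -> | pl]; first 3 last.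
- by apply: Rle_trans (Rmin_r _ _) (IHl _); rewrite in_cons pq.
- exact: Rmin_l.
- by apply: Rle_trans (Rmin_r _ _) (IHl _); rewrite in_cons pl orbT.
Qed.

Lemma adjbP (V : finType) (P : V -> V -> R) x y :
  reflect (x <> y /\ 0 < P x y) (adjb P x y).
Proof.
rewrite /adjb; case: Rlt_dec => Pxy; rewrite ?andbT ?andbF.
- by apply: (iffP idP) => [/eqP | [/eqP]].
- by constructor=> -[].
Qed.

Lemma P0_le_edge (V : finType) (P d : V -> V -> R) x y :
  adjb P x y -> P0 P d <= P x y * d x y ^ 2.
Proof.
move=> xy.
have : (x, y) \in enum [pred p : V * V | adjb P p.1 p.2] by rewrite mem_enum.
rewrite /P0; case: (enum _) => [|q l] //.
by move=> /(foldr_Rmin_le _ (fun p : V * V => P p.1 p.2 * d p.1 p.2 ^ 2)).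
Qed.

Lemma P0_grad_minus_sq_le (V : finType) (P d : V -> V -> R) (f : V -> R) x :
  (forall x y, 0 <= P x y) -> (forall x y, d x y = 0 -> x = y) ->
  P0 P d * grad_minus P d f x ^ 2 <=
    \big[Rplus/0]_(y : V) (P x y * negpart (f y - f x) ^ 2).
Proof.
move=> P_ge0 d_eq0.
have term_ge0 y : 0 <= P x y * negpart (f y - f x) ^ 2.
  by apply: Rmult_le_pos; [exact: P_ge0 | exact: pow2_ge_0].
rewrite /grad_minus.
have [->|[y xy ->]] :=
  bigRmax0_cases _ (adjb P x) (fun y => negpart (f y - f x) / d x y).
  by have := Rsum_ge_term _ _ x term_ge0; have := term_ge0 x; lra.
apply: Rle_trans (Rsum_ge_term _ _ y term_ge0).
have dxy : d x y <> 0 by move=> /d_eq0 x_y; case/adjbP: xy.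
rewrite (_ : P x y * _ = P x y * d x y ^ 2 * (negpart (f y - f x) / d x y) ^ 2);
  last by field.
by apply: Rmult_le_compat_r; [exact: pow2_ge_0 | exact: P0_le_edge].
Qed.

Lemma concave_taylor_negpart a b (phi phi1 phi2 phi3 : R -> R) u c :
  (forall s, in_oint a b s -> is_derive phi s (phi1 s)) ->
  (forall s, in_oint a b s -> is_derive phi1 s (phi2 s)) ->
  (forall s, in_oint a b s -> is_derive phi2 s (phi3 s)) ->
  in_oint a b u -> in_oint a b c ->
  (forall s, c < s < u -> phi2 s <= 0) ->
  (forall s, u < s < c -> 0 <= phi3 s) ->
  phi u - phi c <= phi1 c * (u - c) + phi2 c / 2 * negpart (u - c) ^ 2.
Proof.
move=> d_phi d_phi1 d_phi2 Iu Ic phi2_le0 phi3_ge0.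
rewrite /negpart; have [cu|uc] := Rle_lt_dec c u.
- rewrite Rmax_right; last lra.
  suff: phi u - phi c <= phi1 c * (u - c) by lra.
  by apply: (taylor1_le_right _ _ _ _ _ cu _ _ phi2_le0) => s Hs;
    [apply/d_phi | apply/d_phi1]; exact: in_oint_between Ic Iu Hs.
- rewrite Rmax_left; last lra.
  rewrite (_ : (- (u - c)) ^ 2 = (u - c) ^ 2); last ring.
  apply: (taylor2_le_left _ _ _ _ _ _ (Rlt_le _ _ uc) _ _ _ phi3_ge0) => s Hs;
    [apply/d_phi | apply/d_phi1 | apply/d_phi2]; exact: in_oint_between Iu Ic Hs.
Qed.

Theorem lemma5p2 (V : finType) (P d : V -> V -> R)
  (HG : reversible_metric_chain P d)
  (f : V -> R) (a b : Rbar) (phi phi1 phi2 phi3 : R -> R)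
  (HI : forall v, in_oint a b (f v))
  (Hconc : concave_on a b phi)
  (Hd1 : forall s, in_oint a b s -> is_derive phi s (phi1 s))
  (Hd2 : forall s, in_oint a b s -> is_derive phi1 s (phi2 s))
  (Hd3 : forall s, in_oint a b s -> is_derive phi2 s (phi3 s))
  (x : V)
  (H3 : forall s, (exists y, adjb P x y /\ f y < s) -> s < f x -> 0 <= phi3 s) :
  Lap P (fun v => phi (f v)) x <=
    phi1 (f x) * Lap P f x + P0 P d / 2 * phi2 (f x) * (grad_minus P d f x) ^ 2.
Proof.
have [P_ge0 [_ [_ [d_eq0 _]]]] := HG.
have phi2_le0 s : in_oint a b s -> phi2 s <= 0.
  move=> Is; apply: (concave_derive2_le0 a b phi phi1 phi2 s Hconc Hd1 Hd2 Is).
  by apply: ex_derive_continuous; exists (phi3 s); exact: Hd3.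
have step y : P x y * (phi (f y) - phi (f x)) <=
    P x y * (phi1 (f x) * (f y - f x) + phi2 (f x) / 2 * negpart (f y - f x) ^ 2).
  have [->|Pxy] := Req_dec (P x y) 0; first lra.
  apply: Rmult_le_compat_l; first exact: P_ge0.
  apply: (concave_taylor_negpart a b phi phi1 phi2 phi3) => // s [lo hi].
  - by apply: phi2_le0; apply: (in_oint_between a b (f x) (f y)) => //; lra.
  - apply: H3 (hi); exists y; split=> //; apply/adjbP; split.
      by move=> x_y; rewrite x_y in hi; lra.
    by have := P_ge0 x y; lra.
have := P0_grad_minus_sq_le V P d f x P_ge0 (fun x y => proj1 (d_eq0 x y)).
have := phi2_le0 (f x) (HI x).
suff: Lap P (fun v => phi (f v)) x <= phi1 (f x) * Lap P f x +
    phi2 (f x) / 2 * \big[Rplus/0]_(y : V) (P x y * negpart (f y - f x) ^ 2) by nra.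
rewrite /Lap -!Rsum_distrr -big_split /=.
by apply: Rsum_le => y; have := step y; lra.
Qed.
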